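(* Let $\alpha$ be irrational, $K\ge 2$, and let $0\le N<q_K$ have Ostrowski expansion $N=\sum_{\ell=0}^{K-1}b_\ell q_\ell$ (with $b_\ell:=0$ for $\ell\ge K$). Let $1\le \ell\le K-1$ with $b_\ell\ge1$, and let $\varepsilon_\ell(N):=q_\ell\sum_{k=\ell+1}^{K-1}(-1)^{k+\ell}b_k\delta_k$. Then: (i) $-\frac{1}{a_{\ell+1}}\le -q_\ell\delta_\ell\le \varepsilon_\ell(N)\le \frac{1}{a_{\ell+1}}$; (ii) $1-\lvert\varepsilon_\ell(N)\rvert\gg \frac{1}{a_{\ell+2}}$, and if moreover $b_{\ell+1}\le \frac{a_{\ell+2}}{2}$, then $1-\lvert \varepsilon_\ell(N)\rvert\gg 1$, with absolute implied constants.
   Context: For irrational $\alpha=[a_0;a_1,a_2,\dots]$, $p_k/q_k=[a_0;a_1,\dots,a_k]$ denote the convergents, with $q_{k+1}=a_{k+1}q_k+q_{k-1}$, and $\delta_k:=\lVert q_k\alpha\rVert=\lvert q_k\alpha-p_k\rvert$, where $\lVert x\rVert$ is the distance from $x$ to the nearest integer. The Ostrowski expansion of an integer $0\le N<q_K$ is the unique representation $N=\sum_{\ell=0}^{K-1}b_\ell q_\ell$ with integers $0\le b_\ell\le a_{\ell+1}$, $b_0<a_1$, and $b_{\ell-1}=0$ whenever $b_\ell=a_{\ell+1}$. $f\gg g$ means $f\ge c\,g$ for a positive absolute constant $c$. *)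

From Stdlib Require Import Reals ZArith Lra Lia.
Open Scope R_scope.

(* floor of a real number: Int_part r = up r - 1 is the floor of r *)
Definition floorZ (x : R) : Z := Int_part x.

Fixpoint cf_x (alpha : R) (k : nat) : R :=
  match k with
  | O => alpha
  | S k' => / (cf_x alpha k' - IZR (floorZ (cf_x alpha k')))
  end.

Definition cf_a (alpha : R) (k : nat) : Z := floorZ (cf_x alpha k).

(* denominators of convergents: q_{-1} = 0, q_0 = 1, q_{k+1} = a_{k+1} q_k + q_{k-1} *)
Fixpoint cf_q (alpha : R) (k : nat) : Z :=
  match k with
  | O => 1%Z
  | S O => cf_a alpha 1
  | S ((S k'') as k') => (cf_a alpha k * cf_q alpha k' + cf_q alpha k'')%Z
  end.

(* numerators of convergents: p_{-1} = 1, p_0 = a_0, p_{k+1} = a_{k+1} p_k + p_{k-1} *)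
Fixpoint cf_p (alpha : R) (k : nat) : Z :=
  match k with
  | O => cf_a alpha 0
  | S O => (cf_a alpha 1 * cf_a alpha 0 + 1)%Z
  | S ((S k'') as k') => (cf_a alpha k * cf_p alpha k' + cf_p alpha k'')%Z
  end.

(* delta_k = || q_k alpha || = | q_k alpha - p_k | *)
Definition cf_delta (alpha : R) (k : nat) : R :=
  Rabs (IZR (cf_q alpha k) * alpha - IZR (cf_p alpha k)).

Definition irrational (alpha : R) : Prop :=
  forall (m n : Z), n <> 0%Z -> alpha <> IZR m / IZR n.

(* finite sum  sum_{i = m}^{n-1} f i  (empty if n <= m) *)
Fixpoint sumR_range (m : nat) (len : nat) (f : nat -> R) : R :=
  match len with
  | O => 0
  | S l => f m + sumR_range (S m) l f
  end.
Definition sumR (m n : nat) (f : nat -> R) : R := sumR_range m (n - m) f.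

Definition ostrowski (alpha : R) (K : nat) (N : Z) (b : nat -> Z) : Prop :=
  (0 <= N < cf_q alpha K)%Z /\
  IZR N = sumR 0 K (fun l => IZR (b l) * IZR (cf_q alpha l)) /\
  (forall l, (l < K)%nat -> (0 <= b l <= cf_a alpha (S l))%Z) /\
  (b 0%nat < cf_a alpha 1)%Z /\
  (forall l, (1 <= l < K)%nat -> b l = cf_a alpha (S l) -> b (l - 1)%nat = 0%Z) /\
  (forall l, (K <= l)%nat -> b l = 0%Z).

Definition ostr_eps (alpha : R) (K : nat) (b : nat -> Z) (l : nat) : R :=
  IZR (cf_q alpha l) *
  sumR (S l) K (fun k => (-1) ^ (k + l) * IZR (b k) * cf_delta alpha k).

From Stdlib Require Import Reals ZArith Lra Lia.
Open Scope R_scope.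

(* Write D_k = q_k alpha - p_k.  The recursions for q_k and p_k together with
   x_k = a_k + 1/x_(k+1) give D_k x_(k+1) = -D_(k-1), hence
   delta_(k+1) = delta_k / x_(k+2), delta_k = a_(k+2) delta_(k+1) + delta_(k+2)
   and delta_k (x_(k+1) q_k + q_(k-1)) = 1.  Because 0 <= b_k <= a_(k+1), each
   term b_k delta_k is at most the gap delta_(k-1) - delta_(k+1), so the
   alternating tail defining eps_l lies between -delta_(l+1) and delta_l, i.e.
   -q_l delta_l <= eps_l <= q_l delta_(l+1).  Both estimates then follow from
   q_l delta_l <= 1/x_(l+1) <= 1/(1 + 1/x_(l+2)), with constant 1/4. *)

Lemma irrational_frac_part_bounds y :
  irrational y -> 0 < y - IZR (floorZ y) < 1.
Proof.
  intros y_irr. unfold floorZ. destruct (base_Int_part y) as [floor_le floor_gt].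
  assert (y <> IZR (Int_part y)).
  { intro E. apply (y_irr (Int_part y) 1%Z); [lia|].
    unfold Rdiv. rewrite Rinv_1, Rmult_1_r. exact E. }
  lra.
Qed.

Lemma irrational_inv_frac_part y :
  irrational y -> irrational (/ (y - IZR (floorZ y))).
Proof.
  intros y_irr m n n_nz E.
  pose proof (irrational_frac_part_bounds y y_irr) as [f_pos f_lt1].
  set (f := y - IZR (floorZ y)) in *.
  assert (n_nz' : IZR n <> 0) by (apply not_0_IZR; exact n_nz).
  assert (f_m : f * IZR m = IZR n).
  { replace (f * IZR m) with (f * (IZR m / IZR n) * IZR n) by (field; exact n_nz').
    rewrite <- E. field. lra. }
  assert (m_nz : m <> 0%Z).
  { intros ->. rewrite Rmult_0_r in f_m. symmetry in f_m. exact (n_nz' f_m). }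
  apply (y_irr (floorZ y * m + n)%Z m m_nz).
  rewrite plus_IZR, mult_IZR, <- f_m. unfold f. field.
  apply not_0_IZR. exact m_nz.
Qed.

Section ContinuedFraction.

Variable alpha : R.
Hypothesis alpha_irr : irrational alpha.

Lemma irrational_cf_x k : irrational (cf_x alpha k).
Proof.
  induction k as [|k IHk]; [exact alpha_irr | exact (irrational_inv_frac_part _ IHk)].
Qed.

Lemma cf_x_sub_a_bounds k : 0 < cf_x alpha k - IZR (cf_a alpha k) < 1.
Proof. exact (irrational_frac_part_bounds _ (irrational_cf_x k)). Qed.

Lemma cf_x_succ k : cf_x alpha (S k) = / (cf_x alpha k - IZR (cf_a alpha k)).
Proof. reflexivity. Qed.

Lemma cf_x_succ_gt1 k : 1 < cf_x alpha (S k).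
Proof.
  rewrite cf_x_succ. pose proof (cf_x_sub_a_bounds k).
  rewrite <- Rinv_1. apply Rinv_lt_contravar; lra.
Qed.

Lemma cf_x_eq k : cf_x alpha k = IZR (cf_a alpha k) + / cf_x alpha (S k).
Proof. rewrite cf_x_succ, Rinv_inv. ring. Qed.

Lemma cf_a_succ_ge1 k : 1 <= IZR (cf_a alpha (S k)).
Proof.
  pose proof (cf_x_sub_a_bounds (S k)). pose proof (cf_x_succ_gt1 k).
  assert (0 < cf_a alpha (S k))%Z by (apply lt_IZR; simpl; lra).
  apply IZR_le. lia.
Qed.

Lemma cf_a_succ_le_x k : 1 <= IZR (cf_a alpha (S k)) <= cf_x alpha (S k).
Proof. pose proof (cf_a_succ_ge1 k). pose proof (cf_x_sub_a_bounds (S k)). lra. Qed.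

(* [q_(k-1)] and [p_(k-1)], with [q_(-1) = 0] and [p_(-1) = 1]. *)
Definition cf_q_prev k := match k with O => 0 | S k' => IZR (cf_q alpha k') end.
Definition cf_p_prev k := match k with O => 1 | S k' => IZR (cf_p alpha k') end.

Definition cf_dev k := IZR (cf_q alpha k) * alpha - IZR (cf_p alpha k).

Lemma cf_q_succ k :
  IZR (cf_q alpha (S k)) = IZR (cf_a alpha (S k)) * IZR (cf_q alpha k) + cf_q_prev k.
Proof.
  destruct k as [|k].
  - simpl. ring.
  - change (cf_q alpha (S (S k)))
      with (cf_a alpha (S (S k)) * cf_q alpha (S k) + cf_q alpha k)%Z.
    rewrite plus_IZR, mult_IZR. reflexivity.
Qed.

Lemma cf_p_succ k :
  IZR (cf_p alpha (S k)) = IZR (cf_a alpha (S k)) * IZR (cf_p alpha k) + cf_p_prev k.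
Proof.
  destruct k as [|k].
  - change (cf_p alpha 1) with (cf_a alpha 1 * cf_a alpha 0 + 1)%Z.
    rewrite plus_IZR, mult_IZR. reflexivity.
  - change (cf_p alpha (S (S k)))
      with (cf_a alpha (S (S k)) * cf_p alpha (S k) + cf_p alpha k)%Z.
    rewrite plus_IZR, mult_IZR. reflexivity.
Qed.

Lemma cf_dev_mul_x k :
  cf_dev k * cf_x alpha (S k) = - (cf_q_prev k * alpha - cf_p_prev k).
Proof.
  induction k as [|k IHk]; rewrite cf_x_succ.
  - pose proof (cf_x_sub_a_bounds 0).
    unfold cf_dev. change (cf_x alpha 0) with alpha in *. simpl. field. lra.
  - pose proof (cf_x_sub_a_bounds (S k)).
    cbn [cf_q_prev cf_p_prev]. unfold cf_dev in *.
    rewrite cf_q_succ, cf_p_succ.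
    replace ((IZR (cf_a alpha (S k)) * IZR (cf_q alpha k) + cf_q_prev k) * alpha
             - (IZR (cf_a alpha (S k)) * IZR (cf_p alpha k) + cf_p_prev k))
      with (IZR (cf_a alpha (S k)) * (IZR (cf_q alpha k) * alpha - IZR (cf_p alpha k))
            - (IZR (cf_q alpha k) * alpha - IZR (cf_p alpha k)) * cf_x alpha (S k))
      by (rewrite IHk; ring).
    field. lra.
Qed.

Lemma cf_delta_0 : cf_delta alpha 0 = / cf_x alpha 1.
Proof.
  pose proof (cf_dev_mul_x 0) as E. pose proof (cf_x_succ_gt1 0).
  cbn [cf_q_prev cf_p_prev] in E.
  assert (D : cf_dev 0 = / cf_x alpha 1).
  { apply (Rmult_eq_reg_r (cf_x alpha 1)); [rewrite E; field|]; lra. }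
  unfold cf_delta. fold (cf_dev 0). rewrite D, Rabs_pos_eq; [reflexivity|].
  left. apply Rinv_0_lt_compat. lra.
Qed.

Lemma cf_delta_succ k : cf_delta alpha (S k) = cf_delta alpha k / cf_x alpha (S (S k)).
Proof.
  pose proof (cf_dev_mul_x (S k)) as E. pose proof (cf_x_succ_gt1 (S k)).
  cbn [cf_q_prev cf_p_prev] in E. fold (cf_dev k) in E.
  unfold cf_delta. fold (cf_dev k) (cf_dev (S k)).
  rewrite <- (Rabs_Ropp (cf_dev k)), <- E, Rabs_mult, (Rabs_pos_eq (cf_x _ _)) by lra.
  field. lra.
Qed.

Lemma cf_delta_pos k : 0 < cf_delta alpha k.
Proof.
  induction k as [|k IHk].
  - rewrite cf_delta_0. apply Rinv_0_lt_compat. pose proof (cf_x_succ_gt1 0). lra.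
  - rewrite cf_delta_succ. pose proof (cf_x_succ_gt1 (S k)).
    apply Rdiv_lt_0_compat; lra.
Qed.

Lemma cf_delta_rec k :
  cf_delta alpha k
  = IZR (cf_a alpha (S (S k))) * cf_delta alpha (S k) + cf_delta alpha (S (S k)).
Proof.
  pose proof (cf_x_succ_gt1 (S k)). pose proof (cf_x_succ_gt1 (S (S k))).
  rewrite (cf_delta_succ (S k)), (cf_delta_succ k).
  replace (IZR (cf_a alpha (S (S k))))
    with (cf_x alpha (S (S k)) - / cf_x alpha (S (S (S k))))
    by (rewrite (cf_x_eq (S (S k))); ring).
  field. lra.
Qed.

Lemma cf_q_bounds k : 1 <= IZR (cf_q alpha k) /\ 0 <= cf_q_prev k.
Proof.
  induction k as [|k [IHq IHqp]].
  - simpl. lra.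
  - rewrite cf_q_succ. pose proof (cf_a_succ_ge1 k). cbn [cf_q_prev].
    assert (1 <= IZR (cf_a alpha (S k)) * IZR (cf_q alpha k)).
    { rewrite <- (Rmult_1_l 1). apply Rmult_le_compat; lra. }
    split; lra.
Qed.

Lemma cf_delta_mul_q k :
  cf_delta alpha k * (cf_x alpha (S k) * IZR (cf_q alpha k) + cf_q_prev k) = 1.
Proof.
  induction k as [|k IHk].
  - rewrite cf_delta_0. change (IZR (cf_q alpha 0)) with 1. cbn [cf_q_prev].
    pose proof (cf_x_succ_gt1 0). field. lra.
  - rewrite cf_q_succ, cf_delta_succ. cbn [cf_q_prev].
    pose proof (cf_x_succ_gt1 (S k)).
    rewrite <- IHk, (cf_x_eq (S k)). field. lra.
Qed.

Lemma cf_q_delta_le_inv_x k : IZR (cf_q alpha k) * cf_delta alpha k <= / cf_x alpha (S k).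
Proof.
  pose proof (cf_delta_mul_q k) as E. pose proof (cf_delta_pos k).
  pose proof (cf_q_bounds k) as [_ qp_ge0]. pose proof (cf_x_succ_gt1 k).
  assert (cf_delta alpha k * cf_q_prev k >= 0) by nra.
  apply Rmult_le_reg_r with (cf_x alpha (S k)); [lra|].
  rewrite Rinv_l by lra. nra.
Qed.

Lemma cf_x_ge_1_add_inv k : 1 + / cf_x alpha (S (S k)) <= cf_x alpha (S k).
Proof. rewrite (cf_x_eq (S k)). pose proof (cf_a_succ_ge1 k). lra. Qed.

Lemma cf_q_delta_le_inv_a k :
  IZR (cf_q alpha k) * cf_delta alpha k <= / IZR (cf_a alpha (S k)).
Proof.
  pose proof (cf_a_succ_le_x k).
  eapply Rle_trans; [apply cf_q_delta_le_inv_x | apply Rinv_le_contravar; lra].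
Qed.

Lemma cf_delta_succ_le k : cf_delta alpha (S k) <= cf_delta alpha k.
Proof.
  rewrite (cf_delta_rec k).
  pose proof (cf_a_succ_ge1 (S k)). pose proof (cf_delta_pos (S k)).
  pose proof (cf_delta_pos (S (S k))). nra.
Qed.

End ContinuedFraction.

Fixpoint altsum (g : nat -> R) (m n : nat) : R :=
  match n with O => 0 | S n' => g m - altsum g (S m) n' end.

Lemma sumR_range_alternating (f g : nat -> R) (l m n : nat) :
  (forall k, f k = (-1) ^ (k + l) * g k) ->
  sumR_range m n f = (-1) ^ (m + l) * altsum g m n.
Proof.
  intros f_eq. revert m. induction n as [|n IHn]; intros m; cbn [sumR_range altsum].
  - ring.
  - rewrite IHn, f_eq. cbn [Nat.add pow]. ring.
Qed.

Section AlternatingSum.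

Variables g d : nat -> R.
Hypothesis d_nonneg : forall k, 0 <= d k.
Hypothesis g_bounds : forall k, 0 <= g (S k) <= d k - d (S (S k)).

Lemma altsum_bounds m n : - d (S m) <= altsum g (S m) n <= d m.
Proof.
  revert m. induction n as [|n IHn]; intros m; cbn [altsum].
  - pose proof (d_nonneg m). pose proof (d_nonneg (S m)). lra.
  - pose proof (IHn (S m)). pose proof (g_bounds m). lra.
Qed.

Lemma altsum_le_head m n : altsum g (S m) n <= g (S m) + d (S (S m)).
Proof.
  destruct n as [|n]; cbn [altsum].
  - pose proof (g_bounds m). pose proof (d_nonneg (S (S m))). lra.
  - pose proof (altsum_bounds (S m) n). lra.
Qed.

End AlternatingSum.

Lemma ostr_eps_altsum alpha K b l :
  ostr_eps alpha K b l
  = - IZR (cf_q alpha l) * altsum (fun k => IZR (b k) * cf_delta alpha k) (S l) (K - S l).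
Proof.
  unfold ostr_eps, sumR.
  rewrite (sumR_range_alternating _ (fun k => IZR (b k) * cf_delta alpha k) l)
    by (intros; ring).
  replace (S l + l)%nat with (S (2 * l)) by lia. rewrite pow_1_odd. ring.
Qed.

Lemma ostrowski_digit_bounds alpha K N b :
  irrational alpha -> ostrowski alpha K N b ->
  forall k, 0 <= IZR (b k) <= IZR (cf_a alpha (S k)).
Proof.
  intros alpha_irr (_ & _ & b_range & _ & _ & b_zero) k.
  destruct (Nat.lt_ge_cases k K) as [k_lt | k_ge].
  - destruct (b_range k k_lt). split; apply IZR_le; lia.
  - rewrite (b_zero k k_ge). pose proof (cf_a_succ_ge1 alpha alpha_irr k). lra.
Qed.

Section OstrowskiEps.

Variables (alpha : R) (K : nat) (N : Z) (b : nat -> Z) (l : nat).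
Hypothesis alpha_irr : irrational alpha.
Hypothesis N_ostrowski : ostrowski alpha K N b.

Lemma ostrowski_terms_bounds k :
  0 <= IZR (b (S k)) * cf_delta alpha (S k)
    <= cf_delta alpha k - cf_delta alpha (S (S k)).
Proof.
  pose proof (ostrowski_digit_bounds _ _ _ _ alpha_irr N_ostrowski (S k)).
  pose proof (cf_delta_pos alpha alpha_irr (S k)).
  rewrite (cf_delta_rec alpha alpha_irr k). split; nra.
Qed.

Lemma ostr_eps_bounds :
  - (IZR (cf_q alpha l) * cf_delta alpha l) <= ostr_eps alpha K b l
    <= IZR (cf_q alpha l) * cf_delta alpha (S l).
Proof.
  rewrite ostr_eps_altsum.
  pose proof (altsum_bounds (fun k => IZR (b k) * cf_delta alpha k) _
                (fun k => Rlt_le _ _ (cf_delta_pos alpha alpha_irr k))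
                ostrowski_terms_bounds l (K - S l)).
  pose proof (cf_q_bounds alpha alpha_irr l) as [q_ge1 _]. split; nra.
Qed.

Lemma ostr_eps_ge_head :
  - (IZR (cf_q alpha l)
     * (IZR (b (S l)) * cf_delta alpha (S l) + cf_delta alpha (S (S l))))
    <= ostr_eps alpha K b l.
Proof.
  rewrite ostr_eps_altsum.
  pose proof (altsum_le_head (fun k => IZR (b k) * cf_delta alpha k) _
                (fun k => Rlt_le _ _ (cf_delta_pos alpha alpha_irr k))
                ostrowski_terms_bounds l (K - S l)).
  pose proof (cf_q_bounds alpha alpha_irr l) as [q_ge1 _]. nra.
Qed.

Lemma ostr_eps_within_inv_a :
  - / IZR (cf_a alpha (S l)) <= - (IZR (cf_q alpha l) * cf_delta alpha l) /\
  - (IZR (cf_q alpha l) * cf_delta alpha l) <= ostr_eps alpha K b l /\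
  ostr_eps alpha K b l <= / IZR (cf_a alpha (S l)).
Proof.
  pose proof ostr_eps_bounds as [eps_lo eps_hi].
  pose proof (cf_q_delta_le_inv_a alpha alpha_irr l).
  pose proof (cf_delta_succ_le alpha alpha_irr l).
  pose proof (cf_q_bounds alpha alpha_irr l) as [q_ge1 _].
  assert (IZR (cf_q alpha l) * cf_delta alpha (S l)
          <= IZR (cf_q alpha l) * cf_delta alpha l)
    by (apply Rmult_le_compat_l; lra).
  lra.
Qed.

Lemma one_sub_abs_ostr_eps_ge :
  1 - Rabs (ostr_eps alpha K b l) >= (1/4) / IZR (cf_a alpha (S (S l))) /\
  (IZR (b (S l)) <= IZR (cf_a alpha (S (S l))) / 2 ->
   1 - Rabs (ostr_eps alpha K b l) >= 1/4).
Proof.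
  pose proof ostr_eps_bounds as [eps_lo eps_hi].
  pose proof ostr_eps_ge_head as eps_lo_head.
  pose proof (cf_q_delta_le_inv_x alpha alpha_irr l) as qd_le.
  pose proof (cf_x_ge_1_add_inv alpha alpha_irr l) as x1_ge.
  pose proof (cf_delta_rec alpha alpha_irr l) as delta_rec.
  pose proof (cf_delta_succ_le alpha alpha_irr (S l)) as delta2_le.
  rewrite (cf_delta_succ alpha alpha_irr l) in eps_hi, eps_lo_head, delta_rec, delta2_le.
  pose proof (cf_q_bounds alpha alpha_irr l) as [q_ge1 _].
  pose proof (cf_delta_pos alpha alpha_irr l).
  pose proof (cf_delta_pos alpha alpha_irr (S (S l))).
  pose proof (cf_a_succ_ge1 alpha alpha_irr (S l)).
  pose proof (cf_x_sub_a_bounds alpha alpha_irr (S (S l))).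
  pose proof (cf_x_succ_gt1 alpha alpha_irr (S l)).
  unfold Rdiv in *.
  set (eps := ostr_eps alpha K b l) in *.
  set (Q := IZR (cf_q alpha l)) in *.
  set (E := cf_delta alpha l) in *.
  set (x1 := cf_x alpha (S l)) in *.
  set (x2 := cf_x alpha (S (S l))) in *.
  set (w := / x2) in *.
  set (A := IZR (cf_a alpha (S (S l)))) in *.
  assert (w_lt1 : w < 1) by (unfold w; rewrite <- Rinv_1; apply Rinv_lt_contravar; lra).
  assert (w_ge : / (2 * A) <= w) by (apply Rinv_le_contravar; lra).
  assert (w_pos : 0 < w) by (apply Rinv_0_lt_compat; lra).
  assert (r_bound : Q * E * (1 + w) <= 1).
  { apply Rle_trans with (Q * E * x1); [nra|].
    apply Rmult_le_reg_r with (/ x1); [apply Rinv_0_lt_compat; lra|].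
    rewrite Rmult_assoc, Rinv_r, Rmult_1_l, Rmult_1_r by lra. exact qd_le. }
  assert (eps_le_half : eps <= 1/2) by nra.
  split.
  - assert (Rabs eps <= 1 - w / 2).
    { apply Rabs_le. destruct (Rle_lt_dec (Q * E) (1/2)); nra. }
    assert (/ 4 * / A = / (2 * A) / 2) by (field; lra).
    lra.
  - intros b_small.
    assert (A * (E * w) <= E) by nra.
    assert (IZR (b (S l)) * (E * w) <= E / 2) by nra.
    assert (eps_ge : - (Q * E * (1 / 2 + w)) <= eps) by nra.
    assert (Rabs eps <= 3/4).
    { apply Rabs_le. destruct (Rle_lt_dec (Q * E) (1/2)); nra. }
    lra.
Qed.

End OstrowskiEps.

Theorem proposition2 :
  (forall (alpha : R) (K : nat) (N : Z) (b : nat -> Z) (l : nat),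
      irrational alpha -> (2 <= K)%nat -> ostrowski alpha K N b ->
      (1 <= l <= K - 1)%nat -> (1 <= b l)%Z ->
      - / IZR (cf_a alpha (S l)) <= - (IZR (cf_q alpha l) * cf_delta alpha l) /\
      - (IZR (cf_q alpha l) * cf_delta alpha l) <= ostr_eps alpha K b l /\
      ostr_eps alpha K b l <= / IZR (cf_a alpha (S l))) /\
  (exists c : R, 0 < c /\
    forall (alpha : R) (K : nat) (N : Z) (b : nat -> Z) (l : nat),
      irrational alpha -> (2 <= K)%nat -> ostrowski alpha K N b ->
      (1 <= l <= K - 1)%nat -> (1 <= b l)%Z ->
      1 - Rabs (ostr_eps alpha K b l) >= c / IZR (cf_a alpha (S (S l))) /\
      (IZR (b (S l)) <= IZR (cf_a alpha (S (S l))) / 2 ->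
         1 - Rabs (ostr_eps alpha K b l) >= c)).
Proof.
  split.
  - intros alpha K N b l alpha_irr _ N_ostrowski _ _.
    exact (ostr_eps_within_inv_a alpha K N b l alpha_irr N_ostrowski).
  - exists (1/4). split; [lra|].
    intros alpha K N b l alpha_irr _ N_ostrowski _ _.
    exact (one_sub_abs_ostr_eps_ge alpha K N b l alpha_irr N_ostrowski).
Qed.
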